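(* Let $\mathcal{G}=(\mathcal{P},\mathcal{L})$ be a Fischer space of symplectic type, let $R$ be a commutative ring with $2=0$, and let $A=M_R(\mathcal{G},1)$ be the nilpotent Matsuo algebra. For each line $\ell\in\mathcal{L}$, let $A^\ell_0$ and $A^\ell_1$ be the eigenspaces of $\operatorname{ad}_\ell$ for the eigenvalues $0$ and $1$. Then for each line $\ell$ we have $A=A^\ell_0\oplus A^\ell_1$, and \[ A^\ell_0A^\ell_0\subseteq A^\ell_0,\quad A^\ell_0A^\ell_1\subseteq A^\ell_1,\quad A^\ell_1A^\ell_1\subseteq A^\ell_0; \] that is, $A$ is a decomposition algebra with the $\mathbb{Z}/2\mathbb{Z}$ fusion law $0*0=\{0\}$, $0*1=1*0=\{1\}$, $1*1=\{0\}$, with one decomposition for each line.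
   Context: A 3-transposition group is a pair $(G,D)$ where $D$ is a conjugacy class of involutions generating $G$ such that $de$ has order at most $3$ for all $d,e\in D$. Its Fischer space $\mathcal{G}=(\mathcal{P},\mathcal{L})$ has point set $\mathcal{P}=D$ and as lines the $3$-subsets consisting of the three involutions of a subgroup isomorphic to $\mathrm{Sym}(3)$. Distinct points $p,q$ are collinear ($p\sim q$) if they lie on a common line (equivalently $pq$ has order $3$), and then $p\wedge q$ is the third point of that line. A subspace is a nonempty subset closed under $\wedge$. The subspace generated by two distinct intersecting lines is always either a complete quadrilateral (6 points, 4 lines, any two lines meet in one point, each point on two lines) or an affine plane of order $3$; $\mathcal{G}$ is of symplectic type if it is always a complete quadrilateral. For a commutative ring $R$ with $2=0$, the nilpotent Matsuo algebra $A=M_R(\mathcal{G},1)$ is the free $R$-module with basis $\mathcal{P}$ and commutative bilinear product $p\cdot q=0$ if $p=q$ or $p\not\sim q$, and $p\cdot q=p+q+p\wedge q$ if $p\sim q$. For a line $\ell$, we also write $\ell$ for the element of $A$ that is the sum of its three points, and $\operatorname{ad}_\ell\colon A\to A$, $v\mapsto \ell v$. The eigenspace for eigenvalue $\lambda$ is $\{v\in A:\ell v=\lambda v\}$. *)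

From HB Require Import structures.
From mathcomp Require Import all_boot all_algebra.
From mathcomp Require Import finmap.
From mathcomp Require Import monalg.

Set Implicit Arguments.
Unset Strict Implicit.
Unset Printing Implicit Defensive.

Import GRing.Theory.

Local Open Scope fset_scope.

Section Fischer.

Variable G : groupType.

Definition involution (d : G) : Prop := d != 1%g /\ (d * d)%g = 1%g.

Definition order_le3 (x : G) : Prop :=
  exists2 k : nat, (0 < k <= 3)%N & (x ^+ k)%g = 1%g.

Definition three_transposition_group (D : {pred G}) : Prop :=
  [/\
      exists d0 : G, forall x : G, x \in D <-> exists g : G, x = (d0 ^ g)%g,
      forall d, d \in D -> involution d,
      forall S : {pred G}, group_closed S -> {subset D <= S} ->
        forall g : G, g \in S &
      forall d e, d \in D -> e \in D -> order_le3 (d * e)%g].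

Variable D : {pred G}.

Definition point := {x : G | x \in D}.

Definition collinear (p q : point) : bool :=
  (val p != val q) && (((val p * val q) ^+ 3)%g == 1%g).

(* p /\ q : third point on the line through p and q, namely q p q
   (= p q p when p ~ q).  The default value p is never used when
   (G, D) is a 3-transposition group, as D is closed under conjugation. *)
Definition wedge (p q : point) : point :=
  insubd p (val q * val p * val q)%g.

(* A line: the 3-subset {p, q, p /\ q} for collinear p, q, i.e. the three
   involutions of the subgroup <p, q> ~ Sym(3). Lines are subsets of points. *)
Definition is_line (l : point -> Prop) : Prop :=
  exists p q : point, collinear p q /\
    forall x, l x <-> (x = p \/ x = q \/ x = wedge p q).

Definition wedge_closed (S : point -> Prop) : Prop :=
  forall p q, collinear p q -> S p -> S q -> S (wedge p q).

Definition gen_subspace (X : point -> Prop) : point -> Prop :=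
  fun x => forall S : point -> Prop,
    (forall y, X y -> S y) -> wedge_closed S -> S x.

Definition complete_quadrilateral (S : point -> Prop) : Prop :=
  exists (pts : seq point) (lns : seq {fset point}),
    [/\ uniq pts /\ size pts = 6%N, (forall x, S x <-> x \in pts),
        uniq lns, size lns = 4%N &
     [/\
         forall l, l \in lns -> is_line (fun x => x \in l) /\
                                 (forall x, x \in l -> S x),
         forall L : point -> Prop, is_line L -> (forall x, L x -> S x) ->
           (exists2 l, l \in lns & forall x, L x <-> x \in l),
         forall l l', l \in lns -> l' \in lns -> l != l' ->
           #|` l `&` l'| = 1%N &
         forall x, x \in pts -> count (fun l => x \in l) lns = 2%N]].

Definition symplectic_type : Prop :=
  forall l1 l2 : point -> Prop, is_line l1 -> is_line l2 ->
    (exists x, l1 x /\ l2 x) -> ~ (forall x, l1 x <-> l2 x) ->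
    complete_quadrilateral (gen_subspace (fun x => l1 x \/ l2 x)).

Variable R : comNzRingType.

Definition matsuo := {malg R[point]}.

Local Open Scope ring_scope.

Definition bprod (p q : point) : matsuo :=
  if collinear p q then << p >> + << q >> + << wedge p q >> else 0.

Definition mprod (u v : matsuo) : matsuo :=
  \sum_(p <- msupp u) \sum_(q <- msupp v) (u@_p * v@_q) *: bprod p q.

Definition line_elt (p q : point) : matsuo := << p >> + << q >> + << wedge p q >>.

Definition eigen0 (l : matsuo) (v : matsuo) : Prop := mprod l v = 0.
Definition eigen1 (l : matsuo) (v : matsuo) : Prop := mprod l v = v.

End Fischer.

From HB Require Import structures.
From mathcomp Require Import all_boot all_algebra.
From mathcomp Require Import finmap.
From mathcomp Require Import monalg.
From mathcomp Require Import ring.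

Set Implicit Arguments.
Unset Strict Implicit.
Unset Printing Implicit Defensive.

(* In characteristic 2 the commutative Matsuo product is anticommutative, and for a
   Fischer space of symplectic type it satisfies the Jacobi identity: on basis
   vectors this is a case analysis on collinearity, in which the only delicate case,
   three pairwise collinear points not on a common line, is settled by the complete
   quadrilateral they generate.  Hence every ad_u is a derivation.  For a line
   l = p + q + r the products pq, pr, qr all equal l and ad_x^2 = 0 for each point
   x, so ad_l^2 = ad_pq + ad_pr + ad_qr = 3 ad_l = ad_l.  An idempotent derivation
   splits the algebra into its kernel and its fixed space, and the Leibniz rule
   turns this splitting into a Z/2-grading. *)

Import GRing.Theory.
Local Open Scope ring_scope.

Section IdempotentDerivation.

Variables (V : zmodType) (mul : V -> V -> V) (d : V -> V).
Hypothesis mul0v : forall v, mul 0 v = 0.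
Hypothesis mulv0 : forall v, mul v 0 = 0.
Hypothesis dD : {morph d : u v / u + v}.
Hypothesis d_derivation : forall u v, d (mul u v) = mul u (d v) + mul (d u) v.

Lemma idem_kernel_fixed_decomp : (forall v, d (d v) = d v) ->
  forall v, exists v0 v1, [/\ d v0 = 0, d v1 = v1 & v = v0 + v1].
Proof.
move=> d_idem v; exists (v - d v), (d v); split=> //; last by rewrite subrK.
by apply: (addIr (d (d v))); rewrite -dD subrK d_idem add0r.
Qed.

Lemma derivation_kernel_kernel u v : d u = 0 -> d v = 0 -> d (mul u v) = 0.
Proof. by move=> du dv; rewrite d_derivation du dv mulv0 mul0v addr0. Qed.

Lemma derivation_kernel_fixed u v : d u = 0 -> d v = v -> d (mul u v) = mul u v.
Proof. by move=> du dv; rewrite d_derivation du dv mul0v addr0. Qed.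

Lemma derivation_fixed_kernel u v : d u = u -> d v = 0 -> d (mul u v) = mul u v.
Proof. by move=> du dv; rewrite d_derivation du dv mulv0 add0r. Qed.

Hypothesis char2 : forall v : V, v + v = 0.

Lemma derivation_fixed_fixed u v : d u = u -> d v = v -> d (mul u v) = 0.
Proof. by move=> du dv; rewrite d_derivation du dv char2. Qed.

End IdempotentDerivation.

Section Involutions.

Variable G : groupType.
Local Open Scope group_scope.
Implicit Types x y z : G.

Lemma conjgg x : x ^ x = x.
Proof. by rewrite conjgE mulKg. Qed.

Lemma conjg_fix_conj x y z : x ^ z = x -> x ^ (y ^ z) = (x ^ y) ^ z.
Proof.
move=> xz; have xzV : x ^ z^-1 = x by rewrite -{1}xz conjgK.
by rewrite [y ^ z]conjgE !conjgM xzV.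
Qed.

Lemma conjg_braid x y : x * x = 1 -> y * y = 1 -> (x * y) ^+ 3 = 1 ->
  x ^ y = y ^ x.
Proof.
move=> xx yy; rewrite !conjgE (mulg1_eq xx) (mulg1_eq yy) !expgS expg0 mulg1.
rewrite !mulgA => xy3.
have: (x * y * x) * (y * x * y) = 1 by rewrite !mulgA.
by move/mulg1_eq; rewrite !invgM (mulg1_eq xx) (mulg1_eq yy) !mulgA => <-.
Qed.

End Involutions.

Section FischerPoints.

Variables (G : groupType) (D : {pred G}).
Hypothesis HGD : three_transposition_group D.
Implicit Types a b c : point D.
Local Open Scope group_scope.

Lemma memD_conjg x y : x \in D -> x ^ y \in D.
Proof.
case: HGD => [[d0 classD] _ _ _] /classD [g ->].
by apply/classD; exists (g * y); rewrite conjgM.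
Qed.

Lemma point_mulgg a : val a * val a = 1.
Proof. by case: HGD => _ invD _ _; case: (invD _ (valP a)). Qed.

Lemma point_invg a : (val a)^-1 = val a.
Proof. exact/mulg1_eq/point_mulgg. Qed.

Lemma wedgeE a b : val (wedge a b) = val a ^ val b.
Proof.
have ab_conj : val b * val a * val b = val a ^ val b.
  by rewrite conjgE point_invg mulgA.
by rewrite /wedge ab_conj insubdK // memD_conjg ?(valP a).
Qed.

Lemma point_expg3 a : val a ^+ 3 = val a.
Proof. by rewrite !expgS expg0 mulg1 point_mulgg mulg1. Qed.

Lemma point_mulg_eq1 a b : val a * val b = 1 -> a = b.
Proof. by move/mulg1_eq; rewrite point_invg => /val_inj. Qed.

Lemma collinearE a b : collinear a b = (val a ^ val b != val a).
Proof.
have ab_conjC : val a * val b = val b * val a ^ val b by rewrite conjgC.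
rewrite /collinear; have [ab_fix | ab_nfix] := eqVneq (val a ^ val b) (val a).
  apply/negP => /andP[a_neq_b]; rewrite expgMn; last by rewrite /commute ab_conjC ab_fix.
  by rewrite !point_expg3 => /eqP/point_mulg_eq1 a_eq_b; rewrite a_eq_b eqxx in a_neq_b.
have -> /= : val a != val b by apply: contra_neq ab_nfix => ->; rewrite conjgg.
case: HGD => _ _ _ /(_ _ _ (valP a) (valP b)) [[|[|[|[|k]]]] // _].
- by rewrite expg1 => /point_mulg_eq1 a_eq_b; rewrite a_eq_b conjgg eqxx in ab_nfix.
- move=> /mulg1_eq; rewrite invgM !point_invg ab_conjC => /mulgI ab_fix.
  by rewrite -ab_fix eqxx in ab_nfix.
by move/eqP.
Qed.

Lemma ncollinearP a b : reflect (val a ^ val b = val a) (~~ collinear a b).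
Proof. by rewrite collinearE negbK; apply: eqP. Qed.

Lemma collinear_sym a b : collinear a b = collinear b a.
Proof. by rewrite !collinearE !conjg_fix commg1_sym. Qed.

Lemma collinear_irr a : collinear a a = false.
Proof. by rewrite /collinear eqxx. Qed.

Lemma collinear_neq a b : collinear a b -> a != b.
Proof. by apply: contraTneq => ->; rewrite collinear_irr. Qed.

Lemma collinear_braid a b : collinear a b -> val a ^ val b = val b ^ val a.
Proof.
case/andP=> _ /eqP ab3.
exact: conjg_braid (point_mulgg a) (point_mulgg b) ab3.
Qed.

Lemma wedgeC a b : collinear a b -> wedge a b = wedge b a.
Proof. by move=> ab; apply: val_inj; rewrite !wedgeE (collinear_braid ab). Qed.

Lemma wedgeK a b : wedge (wedge a b) b = a.
Proof. by apply: val_inj; rewrite !wedgeE -conjgM point_mulgg conjg1. Qed.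

Lemma eq_wedge_swap a b c : (a == wedge b c) = (b == wedge a c).
Proof. by apply/eqP/eqP => ->; rewrite wedgeK. Qed.

Lemma wedge_wedge_l a b : collinear a b -> wedge a (wedge a b) = b.
Proof.
move=> ab; apply: val_inj; rewrite !wedgeE (collinear_braid ab).
rewrite (conjg_fix_conj _ (conjgg _)) (collinear_braid ab).
by rewrite -conjgM point_mulgg conjg1.
Qed.

Lemma wedge_wedge_r a b : collinear a b -> wedge b (wedge a b) = a.
Proof.
move=> ab; apply: val_inj; rewrite !wedgeE (conjg_fix_conj _ (conjgg _)).
by rewrite -(collinear_braid ab) -conjgM point_mulgg conjg1.
Qed.

Lemma collinear_wedge_l a b : collinear a b -> collinear a (wedge a b).
Proof.
move=> ab; rewrite collinearE -wedgeE (wedge_wedge_l ab).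
by rewrite (inj_eq val_inj) eq_sym collinear_neq.
Qed.

Lemma collinear_wedge_r a b : collinear a b -> collinear b (wedge a b).
Proof.
move=> ab; rewrite collinearE -wedgeE (wedge_wedge_r ab).
by rewrite (inj_eq val_inj) collinear_neq.
Qed.

Lemma ncollinear_wedge a b c :
  ~~ collinear c a -> ~~ collinear c b -> ~~ collinear c (wedge a b).
Proof.
move=> /ncollinearP ca /ncollinearP cb; apply/ncollinearP.
by rewrite wedgeE (conjg_fix_conj _ cb) ca.
Qed.

Lemma collinear_wedge_ncol a b c :
  collinear a b -> ~~ collinear a c -> collinear a (wedge b c).
Proof.
move=> ab /ncollinearP ac; apply: contraTT ab => /ncollinearP.
by rewrite wedgeE (conjg_fix_conj _ ac) -{2}ac => /conjg_inj /ncollinearP.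
Qed.

Lemma wedge_wedge_ncol a b c : collinear a b -> collinear b c ->
  ~~ collinear a c -> wedge a (wedge b c) = wedge c (wedge a b).
Proof.
move=> ab bc ac; have ca : ~~ collinear c a by rewrite collinear_sym.
move/ncollinearP: ac => ac; move/ncollinearP: ca => ca.
apply: val_inj; rewrite !wedgeE (conjg_fix_conj _ ac) (collinear_braid ab).
by rewrite (conjg_fix_conj _ ca) -(collinear_braid bc) conjJg ac.
Qed.

End FischerPoints.

Section SymplecticSpace.

Variables (G : groupType) (D : {pred G}).
Hypothesis HGD : three_transposition_group D.
Implicit Types (a b c x y z : point D) (S : point D -> Prop).

Definition line_of x y : point D -> Prop := fun z => z = x \/ z = y \/ z = wedge x y.

Lemma line_of_is_line x y : collinear x y -> is_line (line_of x y).
Proof. by move=> xy; exists x, y. Qed.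

Lemma line_of_sub S x y : wedge_closed S -> collinear x y -> S x -> S y ->
  forall z, line_of x y z -> S z.
Proof. by move=> closedS xy Sx Sy z [->|[->|->]] //; apply: closedS. Qed.

Lemma notin_line_of x y z : x != y -> x != z -> x != wedge y z -> ~ line_of y z x.
Proof. by move=> /eqP xy /eqP xz /eqP xw [|[|]]. Qed.

Lemma gen_subspace_closed (X : point D -> Prop) : wedge_closed (gen_subspace X).
Proof.
by move=> x y xy Xx Xy S XS closedS; apply: closedS (Xx S XS closedS) (Xy S XS closedS).
Qed.

Lemma quadrilateral_no_three_lines S c x1 x2 x3 :
  complete_quadrilateral S -> wedge_closed S -> S c -> S x1 -> S x2 -> S x3 ->
  collinear c x1 -> collinear c x2 -> collinear c x3 ->
  ~ line_of c x2 x1 -> ~ line_of c x3 x1 -> ~ line_of c x3 x2 -> False.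
Proof.
move=> [pts [lns [_ Spts _ _ [_ lineS _ count2]]]] closedS Sc S1 S2 S3 c1 c2 c3.
have [l1 l1_in l1E] := lineS _ (line_of_is_line c1) (line_of_sub closedS c1 Sc S1).
have [l2 l2_in l2E] := lineS _ (line_of_is_line c2) (line_of_sub closedS c2 Sc S2).
have [l3 l3_in l3E] := lineS _ (line_of_is_line c3) (line_of_sub closedS c3 Sc S3).
move=> x1_2 x1_3 x2_3.
have: (3 <= count (fun l => c \in l) lns)%N.
  rewrite -size_filter (@uniq_leq_size _ [:: l1; l2; l3]) //.
    rewrite /= !inE negb_or andbT -andbA; apply/and3P; split; apply/eqP => l_eq.
    - by apply: x1_2; apply/l2E; rewrite -l_eq; apply/l1E; right; left.
    - by apply: x1_3; apply/l3E; rewrite -l_eq; apply/l1E; right; left.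
    - by apply: x2_3; apply/l3E; rewrite -l_eq; apply/l2E; right; left.
  move=> l; rewrite !inE mem_filter => /or3P[] /eqP ->; apply/andP; split=> //.
  - by apply/l1E; left.
  - by apply/l2E; left.
  - by apply/l3E; left.
by rewrite count2 // -Spts.
Qed.

Lemma symplectic_ncollinear_wedge a b c : symplectic_type D ->
  collinear a b -> collinear b c -> collinear c a -> c != wedge a b ->
  ~~ collinear c (wedge a b).
Proof.
(* Otherwise c would lie on three distinct lines, through a, b and wedge a b, of the
   complete quadrilateral generated by the lines ab and ca. *)
move=> symp ab bc ca c_ab; apply/negP => cw.
have [a_b b_c c_a] := And3 (collinear_neq ab) (collinear_neq bc) (collinear_neq ca).
have cb : collinear c b by rewrite (collinear_sym HGD).
have a_w := collinear_neq (collinear_wedge_l HGD ab).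
have b_w := collinear_neq (collinear_wedge_r HGD ab).
pose X z := line_of a b z \/ line_of c a z.
have quad : complete_quadrilateral (gen_subspace X).
  apply: symp; [exact: line_of_is_line ab | exact: line_of_is_line ca | |].
    by exists a; split; [left | right; left].
  move/(_ c) => [_ /(_ (or_introl erefl))].
  by apply: notin_line_of; rewrite // eq_sym.
have genX z : X z -> gen_subspace X z by move=> Xz S XS _; apply: XS.
apply: (quadrilateral_no_three_lines quad (gen_subspace_closed (X := X)) _ _ _ _ ca cb cw).
- by apply: genX; right; left.
- by apply: genX; left; left.
- by apply: genX; left; right; left.
- by apply: genX; left; right; right.
- apply: notin_line_of => //; first by rewrite eq_sym.
  by rewrite (eq_wedge_swap HGD).
- apply: notin_line_of => //; first by rewrite eq_sym.
  by rewrite (eq_wedge_swap HGD) (wedge_wedge_l HGD ab) eq_sym.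
by apply: notin_line_of => //; rewrite (eq_wedge_swap HGD) (wedge_wedge_r HGD ab).
Qed.

End SymplecticSpace.

Section FischerAlgebra.

Variables (G : groupType) (D : {pred G}) (R : comNzRingType).
Hypothesis HGD : three_transposition_group D.
Hypothesis HR2 : 2%:R = 0 :> R.
Implicit Types (a b c : point D).
(* The coordinates serve only to check linear identities coefficientwise with [ring]. *)
Variables (V : lmodType R) (e : point D -> V) (coord : point D -> V -> R).
Hypothesis coordD : forall k, {morph coord k : u v / u + v}.
Hypothesis coord_inj : forall u v, (forall k, coord k u = coord k v) -> u = v.
Hypothesis e_ind : forall f : V -> V, {morph f : u v / u + v} ->
  (forall r u, f (r *: u) = r *: f u) -> (forall a, f (e a) = 0) -> forall u, f u = 0.

Definition line_vec a b : V := e a + e b + e (wedge a b).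

Definition basis_prod a b : V := if collinear a b then line_vec a b else 0.

Variable fmul : V -> V -> V.
Hypothesis fmulDl : forall u v w, fmul (u + v) w = fmul u w + fmul v w.
Hypothesis fmulZl : forall r u v, fmul (r *: u) v = r *: fmul u v.
Hypothesis fmulC : commutative fmul.
Hypothesis fmul_basis : forall a b, fmul (e a) (e b) = basis_prod a b.

Implicit Types (u v w : V).

Lemma coord0v k : coord k 0 = 0.
Proof. by apply/(addrI (coord k 0)); rewrite -coordD !addr0. Qed.

(* [ring] uses HR2 only as a rewrite rule, hence the detour through [p = 0]. *)
Ltac coord_char2 := rewrite /line_vec; apply: coord_inj => ?; rewrite ?coordD ?coord0v;
  apply/eqP; rewrite -subr_eq0; apply/eqP; ring: HR2.

Lemma char2_addrr v : v + v = 0.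
Proof. by rewrite -mulr2n -scaler_nat HR2 scale0r. Qed.

Lemma fmulDr u v w : fmul u (v + w) = fmul u v + fmul u w.
Proof. by rewrite fmulC fmulDl !(fmulC u). Qed.

Lemma fmulZr r u v : fmul u (r *: v) = r *: fmul u v.
Proof. by rewrite fmulC fmulZl fmulC. Qed.

Lemma fmul0r v : fmul v 0 = 0.
Proof. by rewrite -(scale0r 0) fmulZr !scale0r. Qed.

Lemma basis_prodC a b : basis_prod a b = basis_prod b a.
Proof.
rewrite /basis_prod (collinear_sym HGD a b); case ba: (collinear b a) => //.
by rewrite /line_vec (wedgeC HGD ba) [in RHS](addrC (e b)).
Qed.

Lemma fmul_basis_line a b c : fmul (e a) (line_vec b c) =
  basis_prod a b + basis_prod a c + basis_prod a (wedge b c).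
Proof. by rewrite !fmulDr !fmul_basis. Qed.

Definition jacobiator u v w := fmul u (fmul v w) + fmul v (fmul w u) + fmul w (fmul u v).

Lemma jacobiator_cycle u v w : jacobiator u v w = jacobiator v w u.
Proof. by rewrite /jacobiator -addrA addrC. Qed.

Lemma jacobiatorDl u u' v w :
  jacobiator (u + u') v w = jacobiator u v w + jacobiator u' v w.
Proof.
rewrite /jacobiator !(fmulDl, fmulDr).
by apply: coord_inj => k; rewrite !coordD; ring.
Qed.

Lemma jacobiatorZl r u v w : jacobiator (r *: u) v w = r *: jacobiator u v w.
Proof. by rewrite /jacobiator !(fmulZl, fmulZr) !scalerDr. Qed.

Lemma jacobiator_basis_ncol a b c : ~~ collinear a b -> ~~ collinear b c ->
  ~~ collinear c a -> jacobiator (e a) (e b) (e c) = 0.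
Proof.
move=> ab bc ca; rewrite /jacobiator !fmul_basis /basis_prod.
by rewrite (negbTE ab) (negbTE bc) (negbTE ca) !fmul0r !addr0.
Qed.

Lemma jacobiator_basis_col1 a b c : collinear a b -> ~~ collinear b c ->
  ~~ collinear c a -> jacobiator (e a) (e b) (e c) = 0.
Proof.
move=> ab bc ca; have cb : ~~ collinear c b by rewrite (collinear_sym HGD).
have cw := ncollinear_wedge HGD ca cb.
rewrite /jacobiator !fmul_basis {1 2}/basis_prod (negbTE bc) (negbTE ca) !fmul0r !add0r.
rewrite /basis_prod ab fmul_basis_line /basis_prod.
by rewrite (negbTE ca) (negbTE cb) (negbTE cw) !addr0.
Qed.

Lemma jacobiator_basis_col2 a b c : collinear a b -> collinear b c ->
  ~~ collinear c a -> jacobiator (e a) (e b) (e c) = 0.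
Proof.
move=> ab bc ca; have [<-|a_c] := eqVneq a c.
  rewrite /jacobiator !fmul_basis [basis_prod a a]/basis_prod collinear_irr.
  by rewrite fmul0r addr0 basis_prodC char2_addrr.
have ac : ~~ collinear a c by rewrite (collinear_sym HGD).
have cb : collinear c b by rewrite (collinear_sym HGD).
have a_wbc := collinear_wedge_ncol HGD ab ac.
have c_wab : collinear c (wedge a b).
  by rewrite (wedgeC HGD ab); apply: (collinear_wedge_ncol HGD cb ca).
rewrite /jacobiator !fmul_basis {1 3}/basis_prod bc ab [basis_prod c a]/basis_prod.
rewrite (negbTE ca) fmul0r addr0 !fmul_basis_line /basis_prod ab cb a_wbc c_wab.
rewrite (negbTE ac) (negbTE ca) /line_vec (wedgeC HGD cb) (wedge_wedge_ncol HGD ab bc ac).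
by coord_char2.
Qed.

Hypothesis symp : symplectic_type D.

Lemma wedge_basis_prod_sum a b c : collinear a b -> collinear b c -> collinear c a ->
  basis_prod a (wedge b c) + basis_prod b (wedge c a) + basis_prod c (wedge a b) = 0.
Proof.
move=> ab bc ca; have [c_ab | c_nab] := eqVneq c (wedge a b).
  have -> : wedge b c = a by rewrite c_ab (wedge_wedge_r HGD ab).
  have -> : wedge c a = b by rewrite c_ab (wedgeC HGD ab) wedgeK.
  by rewrite -c_ab /basis_prod !collinear_irr !addr0.
have a_nbc : a != wedge b c by rewrite (wedgeC HGD bc) (eq_wedge_swap HGD).
have b_nca : b != wedge c a by rewrite (eq_wedge_swap HGD) -(wedgeC HGD ab).
have z1 := symplectic_ncollinear_wedge HGD symp bc ca ab a_nbc.
have z2 := symplectic_ncollinear_wedge HGD symp ca ab bc b_nca.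
have z3 := symplectic_ncollinear_wedge HGD symp ab bc ca c_nab.
by rewrite /basis_prod (negbTE z1) (negbTE z2) (negbTE z3) !addr0.
Qed.

Lemma jacobiator_basis_col3 a b c : collinear a b -> collinear b c ->
  collinear c a -> jacobiator (e a) (e b) (e c) = 0.
Proof.
move=> ab bc ca; rewrite -(wedge_basis_prod_sum ab bc ca).
rewrite /jacobiator !fmul_basis {1}/basis_prod bc {1}/basis_prod ca {1}/basis_prod ab.
rewrite !fmul_basis_line (basis_prodC b a) (basis_prodC c b) (basis_prodC a c).
by coord_char2.
Qed.

Lemma jacobiator_basis a b c : jacobiator (e a) (e b) (e c) = 0.
Proof.
case ab: (collinear a b); case bc: (collinear b c); case ca: (collinear c a).
- exact: jacobiator_basis_col3.
- by apply: jacobiator_basis_col2; rewrite ?ca.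
- by rewrite -jacobiator_cycle; apply: jacobiator_basis_col2; rewrite ?bc.
- by apply: jacobiator_basis_col1; rewrite ?bc ?ca.
- by rewrite jacobiator_cycle; apply: jacobiator_basis_col2; rewrite ?ab.
- by rewrite jacobiator_cycle; apply: jacobiator_basis_col1; rewrite ?ca ?ab.
- by rewrite -jacobiator_cycle; apply: jacobiator_basis_col1; rewrite ?ab ?bc.
by apply: jacobiator_basis_ncol; rewrite ?ab ?bc ?ca.
Qed.

Lemma jacobiator_basis_l v w :
  (forall a, jacobiator (e a) v w = 0) -> forall u, jacobiator u v w = 0.
Proof.
move=> jac_e; apply: e_ind => [u u'|r u|a]; last exact: jac_e.
  by rewrite jacobiatorDl.
by rewrite jacobiatorZl.
Qed.

Lemma jacobiator_eq0 u v w : jacobiator u v w = 0.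
Proof.
apply: jacobiator_basis_l => a; rewrite jacobiator_cycle.
apply: jacobiator_basis_l => b; rewrite jacobiator_cycle.
apply: jacobiator_basis_l => c; rewrite jacobiator_cycle.
exact: jacobiator_basis.
Qed.

Lemma char2_oppr v : - v = v.
Proof. by apply/esym/eqP; rewrite -addr_eq0 char2_addrr. Qed.

Lemma fmul_derivation l u v : fmul l (fmul u v) = fmul u (fmul l v) + fmul (fmul l u) v.
Proof.
have /eqP := jacobiator_eq0 l u v.
by rewrite /jacobiator (fmulC v l) (fmulC v) -addrA addr_eq0 char2_oppr => /eqP.
Qed.

Lemma fmul_basis_sq0 a u : fmul (e a) (fmul (e a) u) = 0.
Proof.
move: u; apply: e_ind => [u v|r u|b]; [by rewrite !fmulDr | by rewrite !fmulZr |].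
rewrite fmul_basis /basis_prod; case ab: (collinear a b); last exact: fmul0r.
rewrite fmul_basis_line /basis_prod collinear_irr ab (collinear_wedge_l HGD ab).
rewrite /line_vec (wedge_wedge_l HGD ab).
by coord_char2.
Qed.

Lemma fmul_line_idem p q u : collinear p q ->
  fmul (line_vec p q) (fmul (line_vec p q) u) = fmul (line_vec p q) u.
Proof.
move=> pq; have pr : fmul (e p) (e (wedge p q)) = line_vec p q.
  rewrite fmul_basis /basis_prod (collinear_wedge_l HGD pq) /line_vec (wedge_wedge_l HGD pq).
  by coord_char2.
have qr : fmul (e q) (e (wedge p q)) = line_vec p q.
  rewrite fmul_basis /basis_prod (collinear_wedge_r HGD pq) /line_vec (wedge_wedge_r HGD pq).
  by coord_char2.
have pq_l : fmul (e p) (e q) = line_vec p q by rewrite fmul_basis /basis_prod pq.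
rewrite {1 2}/line_vec !fmulDl !fmulDr !fmul_basis_sq0.
rewrite !(fmul_derivation (e p) (e q)) !(fmul_derivation (e p) (e (wedge p q))).
rewrite !(fmul_derivation (e q) (e (wedge p q))) pq_l pr qr.
by rewrite /line_vec !fmulDl; coord_char2.
Qed.

End FischerAlgebra.

Section MatsuoProduct.

Variables (G : groupType) (D : {pred G}) (R : comNzRingType).
Hypothesis HGD : three_transposition_group D.
Local Notation A := (matsuo D R).
Implicit Types (a b c : point D) (u v w : A).

Lemma bprodC a b : bprod R a b = bprod R b a.
Proof. exact: (basis_prodC HGD (fun a => << a >>)). Qed.

Lemma mprodEw (S T : {fset point D}) u v :
  (msupp u `<=` S)%fset -> (msupp v `<=` T)%fset ->
  mprod u v = \sum_(p <- S) \sum_(q <- T) (u@_p * v@_q) *: bprod R p q.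
Proof.
move=> uS vT; rewrite /mprod (big_fset_incl _ uS) => [|p _ /mcoeff_outdom ->].
  apply: eq_bigr => p _; apply: big_fset_incl => // q _ /mcoeff_outdom ->.
  by rewrite mulr0 scale0r.
by rewrite big1 // => q _; rewrite mul0r scale0r.
Qed.

Lemma mprodC u v : mprod u v = mprod v u.
Proof.
rewrite (mprodEw (fsubset_refl _) (fsubset_refl (msupp v))).
rewrite (mprodEw (fsubset_refl _) (fsubset_refl (msupp u))) exchange_big.
by apply: eq_bigr => p _; apply: eq_bigr => q _; rewrite mulrC bprodC.
Qed.

Lemma mprodDl u v w : mprod (u + v) w = mprod u w + mprod v w.
Proof.
rewrite !(@mprodEw (msupp u `|` msupp v)%fset (msupp w)) ?fsubsetUl ?fsubsetUr //.
  rewrite -big_split; apply: eq_bigr => p _; rewrite -big_split.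
  by apply: eq_bigr => q _; rewrite mcoeffD mulrDl scalerDl.
exact: msuppD_le.
Qed.

Lemma mprodZl r u v : mprod (r *: u) v = r *: mprod u v.
Proof.
rewrite !(@mprodEw (msupp u) (msupp v)) ?msuppZ_le // scaler_sumr.
apply: eq_bigr => p _; rewrite scaler_sumr.
by apply: eq_bigr => q _; rewrite mcoeffZ scalerA mulrA.
Qed.

Lemma mprodDr u v w : mprod u (v + w) = mprod u v + mprod u w.
Proof.
rewrite !(@mprodEw (msupp u) (msupp v `|` msupp w)%fset) ?fsubsetUl ?fsubsetUr //.
  rewrite -big_split; apply: eq_bigr => p _; rewrite -big_split.
  by apply: eq_bigr => q _; rewrite mcoeffD mulrDr scalerDl.
exact: msuppD_le.
Qed.

Lemma mprod0l v : mprod 0 v = 0.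
Proof. by rewrite /mprod msupp0 big_seq_fset0. Qed.

Lemma mprod0r u : mprod u 0 = 0.
Proof. by rewrite /mprod big1 // => p _; rewrite msupp0 big_seq_fset0. Qed.

Lemma mprodU a b : mprod << a >> << b >> = bprod R a b.
Proof.
rewrite (@mprodEw [fset a]%fset [fset b]%fset) ?msuppU_le // !big_seq_fset1.
by rewrite !mcoeffUU mulr1 scale1r.
Qed.

Lemma malg_linear_eq0 (f : A -> A) : {morph f : u v / u + v} ->
  (forall r u, f (r *: u) = r *: f u) -> (forall a, f << a >> = 0) ->
  forall u, f u = 0.
Proof.
move=> fD fZ fU u; have f0 : f 0 = 0 by rewrite -[0](scale0r 0) fZ !scale0r.
rewrite (monalgE u) (big_morph f fD f0) big1 // => a _.
have -> : << u@_a *g a >> = u@_a *: << a >> :> A.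
  by apply/malgP => k; rewrite mcoeffZ !mcoeffU mulr_natr.
by rewrite fZ fU scaler0.
Qed.

End MatsuoProduct.

Section MatsuoDerivation.

Variables (G : groupType) (D : {pred G}) (R : comNzRingType).
Hypotheses (HGD : three_transposition_group D) (symp : symplectic_type D).
Hypothesis HR2 : 2%:R = 0 :> R.
Local Notation A := (matsuo D R).

Lemma matsuo_coord_inj (u v : A) : (forall k, u@_k = v@_k) -> u = v.
Proof. by move/malgP. Qed.

Lemma mprod_derivation (l u v : A) :
  mprod l (mprod u v) = mprod u (mprod l v) + mprod (mprod l u) v.
Proof.
exact: (fmul_derivation HGD HR2 (coord := fun k u => u@_k) (fun k => @mcoeffD _ _ k)
  matsuo_coord_inj (@malg_linear_eq0 _ _ _) (@mprodDl _ _ _) (@mprodZl _ _ _) (mprodC HGD)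
  (@mprodU _ _ _) symp).
Qed.

Lemma mprod_line_idem p q (u : A) : collinear p q ->
  mprod (line_elt R p q) (mprod (line_elt R p q) u) = mprod (line_elt R p q) u.
Proof.
exact: (fmul_line_idem HGD HR2 (coord := fun k u => u@_k) (fun k => @mcoeffD _ _ k)
  matsuo_coord_inj (@malg_linear_eq0 _ _ _) (@mprodDl _ _ _) (@mprodZl _ _ _) (mprodC HGD)
  (@mprodU _ _ _) symp).
Qed.

End MatsuoDerivation.

Unset Implicit Arguments.

Theorem theorem5p24 (G : groupType) (D : {pred G}) (R : comNzRingType)
    (HGD : three_transposition_group D)
    (Hsymp : symplectic_type D)
    (HR2 : 2%:R = 0 :> R)
    (p q : point D) (Hpq : collinear p q) :
  let l : matsuo D R := line_elt R p q in
  let A0 := eigen0 l in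
  let A1 := eigen1 l in
  [/\ (* A = A0 (+) A1 *)
      (forall v : matsuo D R, exists v0 v1, [/\ A0 v0, A1 v1 & v = v0 + v1]),
      (forall v : matsuo D R, A0 v -> A1 v -> v = 0),
      (* fusion law: 0*0 = {0}, 0*1 = 1*0 = {1}, 1*1 = {0} *)
      (forall u v, A0 u -> A0 v -> A0 (mprod u v)),
      (forall u v, A0 u -> A1 v -> A1 (mprod u v)) &
      [/\ (forall u v, A1 u -> A0 v -> A1 (mprod u v)) &
          (forall u v, A1 u -> A1 v -> A0 (mprod u v))]].
Proof.
rewrite /eigen0 /eigen1 /=; set l := line_elt R p q.
have dD := @mprodDr _ _ _ l.
have d_der := mprod_derivation HGD Hsymp HR2 l.
have m0l (v : matsuo D R) : mprod 0 v = 0 := mprod0l v.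
have m0r (v : matsuo D R) : mprod v 0 = 0 := mprod0r v.
split.
- exact: idem_kernel_fixed_decomp dD (fun v => mprod_line_idem HGD Hsymp HR2 v Hpq).
- by move=> v v0 v1; rewrite -v1 v0.
- exact (derivation_kernel_kernel m0l m0r d_der).
- exact (derivation_kernel_fixed m0l d_der).
split.
- exact (derivation_fixed_kernel m0r d_der).
exact (derivation_fixed_fixed d_der (char2_addrr HR2 (V := matsuo D R))).
Qed.
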